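(* Fix $\omega\in(0,1)$. For a Banach space $(X,\|\cdot\|_X)$ define $f_\omega:X\to X$ by $f_\omega(x)=\|x\|_X^{\omega-1}x$ for $x\neq0$ and $f_\omega(0)=0$. Then for every $p\in(0,\infty)$ and all $x,y\in X$, $$\frac{\eta(p,\omega)\|x-y\|_X}{(\|x\|_X^{p\omega}+\|y\|_X^{p\omega})^{\frac{1-\omega}{p\omega}}}\le\|f_\omega(x)-f_\omega(y)\|_X\le2^{1-\omega}\|x-y\|_X^\omega,$$ where $\eta(p,\omega)=\inf_{\sigma\in[0,1)}\frac{1-\sigma^\omega}{1-\sigma}(1+\sigma^{p\omega})^{\frac{1-\omega}{p\omega}}$. Moreover (for $X\neq\{0\}$) neither of the constants $\eta(p,\omega)$ and $2^{1-\omega}$ in these two inequalities can be improved. *)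

From HB Require Import structures.
From mathcomp Require Import all_boot all_order all_algebra.
From mathcomp Require Import all_classical all_reals all_analysis.
Set Implicit Arguments. Unset Strict Implicit. Unset Printing Implicit Defensive.
Import Order.TTheory GRing.Theory Num.Theory.
Import numFieldNormedType.Exports.
Local Open Scope classical_set_scope.
Local Open Scope ring_scope.

Definition f_omega {R : realType} {X : normedModType R} (w : R) (x : X) : X :=
  if x == 0 then 0 else (`|x| `^ (w - 1)) *: x.

Definition eta_const {R : realType} (p w : R) : R :=
  inf [set ((1 - s `^ w) / (1 - s)) * (1 + s `^ (p * w)) `^ ((1 - w) / (p * w))
      | s in `[0%R, 1%R[ ].

(* Write a = |x| >= b = |y|, t = |x - y| and f = f_omega w.
   Upper bound: f x - f y = a^(w-1) (x - y) + (a^(w-1) - b^(w-1)) y gives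
   |f x - f y| <= a^(w-1) (t - b) + b^w, where a ranges over [max(b, t - b), b + t];
   this profile is at most 2^(1-w) t^w by the concavity of s |-> s^w (Young's
   inequality), in three cases according to the position of t relative to b and 2b.
   Lower bound: x = a^(1-w) f x and y = b^(1-w) f y give
   |x - y| (a^w - b^w) <= |f x - f y| (a - b), which by homogeneity is the claimed
   bound with eta(p, w) replaced by the ratio at s = b/a whose infimum defines it.
   Sharpness: on the line through a unit vector z, x = z and y = s z realise the ratio
   at s, and x = z, y = -z gives equality in the Hoelder bound. *)

From HB Require Import structures.
From mathcomp Require Import all_boot all_order all_algebra.
From mathcomp Require Import all_classical all_reals all_analysis.
From mathcomp Require Import ring lra.
Set Implicit Arguments.
Unset Strict Implicit.
Unset Printing Implicit Defensive.
Import Order.TTheory GRing.Theory Num.Theory.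
Import numFieldNormedType.Exports.
Local Open Scope classical_set_scope.
Local Open Scope ring_scope.

Section PowerFunction.
Variable R : realType.
Implicit Types a b c p r s t u v w : R.

Lemma powR_le1 a r : 0 <= r -> 0 <= a <= 1 -> a `^ r <= 1.
Proof.
move=> r_ge0 /andP[a_ge0 a_le1].
by have := ge0_ler_powR r_ge0 a_ge0 ler01 a_le1; rewrite powR1.
Qed.

Lemma powR1B a r : 0 < a -> a `^ (1 - r) = a * a `^ (- r).
Proof. by move=> a_gt0; rewrite powRD ?powRr1 ?ltW // (gt_eqF a_gt0) implybT. Qed.

Lemma ler_powR_nexp r a b : r <= 0 -> 0 < a -> a <= b -> b `^ r <= a `^ r.
Proof.
move=> r_le0 a_gt0 ab; have b_gt0 := lt_le_trans a_gt0 ab.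
by rewrite /powR !gt_eqF // ler_expR ler_wnM2l // ler_ln ?posrE.
Qed.

Lemma powR_mulB1r a r : 0 <= a -> a `^ r * a `^ (1 - r) = a.
Proof. by move=> a_ge0; rewrite -powRD subrKC ?powRr1 // oner_eq0. Qed.

Lemma powR_mul1BN a r : 0 < a -> a `^ (1 - r) * a `^ (r - 1) = 1.
Proof. by move=> a_gt0; rewrite -[1 - r]opprB powRN mulVf // gt_eqF // powR_gt0. Qed.

Lemma powR_divn2 a r : 0 <= a -> (a / 2) `^ r = 2 `^ (- r) * a `^ r.
Proof.
move=> a_ge0; rewrite powRM ?invr_ge0 // mulrC; congr (_ * _).
by rewrite -powR_inv1 // -powRrM mulN1r.
Qed.

Lemma young_powR w r c : 0 < w -> w < 1 -> 0 <= r -> 0 <= c ->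
  r `^ w * c `^ (1 - w) <= w * r + (1 - w) * c.
Proof.
move=> w_gt0 w_lt1 r_ge0 c_ge0; have w1_gt0 : 0 < 1 - w by rewrite subr_gt0.
have := @conjugate_powR R (r `^ w) (c `^ (1 - w)) w^-1 (1 - w)^-1
  (powR_ge0 _ _) (powR_ge0 _ _) (eqbRL (invr_gt0 _) w_gt0) (eqbRL (invr_gt0 _) w1_gt0).
rewrite !invrK -!powRrM !mulfV ?gt_eqF // !powRr1 // addrC subrK => /(_ erefl).
by rewrite [r * _]mulrC [c * _]mulrC.
Qed.

Lemma powR_sum_le w u v : 0 < w -> w < 1 -> 0 <= u -> 0 <= v ->
  u `^ w + v `^ w <= 2 `^ (1 - w) * (u + v) `^ w.
Proof.
move=> w_gt0 w_lt1 u_ge0 v_ge0; have [uv0|uv_neq0] := eqVneq (u + v) 0.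
  have [-> ->] : u = 0 /\ v = 0 by split; lra.
  by rewrite addr0 powR0 ?gt_eqF // addr0 mulr0.
have c_gt0 : 0 < (u + v) / 2 by rewrite divr_gt0 // lt_neqAle eq_sym uv_neq0 addr_ge0.
set c := (u + v) / 2 in c_gt0 *.
have cw_gt0 : 0 < c `^ (1 - w) by rewrite powR_gt0.
have sum_le : (u `^ w + v `^ w) * c `^ (1 - w) <= 2 * c `^ w * c `^ (1 - w).
  rewrite -mulrA (powR_mulB1r _ (ltW c_gt0)) mulrDl.
  have := young_powR w_gt0 w_lt1 u_ge0 (ltW c_gt0).
  have := young_powR w_gt0 w_lt1 v_ge0 (ltW c_gt0).
  have -> : 2 * c = w * u + (1 - w) * c + (w * v + (1 - w) * c) by rewrite /c; field.
  lra.
rewrite ler_pM2r // in sum_le; apply: le_trans sum_le _.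
by rewrite powR_divn2 ?addr_ge0 // mulrA -powR1B.
Qed.

Lemma powR_divn2_mul w t : 0 < w -> 0 <= t ->
  (t / 2) `^ (w - 1) * t = 2 `^ (1 - w) * t `^ w.
Proof.
move=> w_gt0 t_ge0.
by rewrite powR_divn2 // opprB -mulrA [t `^ _ * t]mulrC mulr_powRB1.
Qed.

Lemma two_powR_le w : 0 < w -> w < 1 -> (2 - w) * 2 `^ (w - 1) <= 2 `^ (1 - w).
Proof.
move=> w_gt0 w_lt1; have v_gt0 : 0 < 2 `^ w :> R by rewrite powR_gt0.
have v_le : 2 `^ w <= 1 + w.
  by have := young_powR w_gt0 w_lt1 (ler0n _ 2) ler01; rewrite powR1 mulr1; lra.
rewrite powR1B // powRB ?powRr1 // ?pnatr_eq0 ?implybT // powRN.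
move: (2 `^ w) v_gt0 v_le => v v_gt0 v_le.
rewrite -(ler_pM2r v_gt0) (divfK (lt0r_neq0 v_gt0)).
have vv_le : (2 - w) * (v * v) <= (2 - w) * ((1 + w) * (1 + w)).
  by apply: ler_wpM2l; [lra | apply: ler_pM; lra].
have -> : (2 - w) * (v / 2) * v = (2 - w) * (v * v) / 2 by ring.
have cubic_le : (2 - w) * ((1 + w) * (1 + w)) <= 4.
  have : 0 <= (1 - w) * (1 - w) * (2 + w) by apply: mulr_ge0; [nra | lra].
  nra.
rewrite ler_pdivrMr //; lra.
Qed.

Lemma holder_profile_near_diag w b t : 0 < w -> w < 1 -> 0 < t -> t <= b ->
  (b + t) `^ (w - 1) * (t - b) + b `^ w <= 2 `^ (1 - w) * t `^ w.
Proof.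
move=> w_gt0 w_lt1 t_gt0 tb.
have s_gt0 : 0 < b + t by lra.
have m_gt0 : 0 < (b + t) `^ (w - 1) by rewrite powR_gt0.
have young_b : b `^ w <= (b + (1 - w) * t) * (b + t) `^ (w - 1).
  have := young_powR w_gt0 w_lt1 (ltW (lt_le_trans t_gt0 tb)) (ltW s_gt0).
  rewrite -(ler_pM2r m_gt0) -mulrA powR_mul1BN // mulr1.
  by have -> : w * b + (1 - w) * (b + t) = b + (1 - w) * t by ring.
have m_le : (b + t) `^ (w - 1) <= 2 `^ (w - 1) * t `^ (w - 1).
  rewrite -powRM ?ler0n //; last exact: ltW.
  by apply: ler_powR_nexp; lra.
apply: (@le_trans _ _ ((2 - w) * t * (b + t) `^ (w - 1))); first lra.
apply: (@le_trans _ _ ((2 - w) * t * (2 `^ (w - 1) * t `^ (w - 1)))).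
  by apply: ler_wpM2l => //; apply: mulr_ge0; lra.
have -> : (2 - w) * t * (2 `^ (w - 1) * t `^ (w - 1)) =
    (2 - w) * 2 `^ (w - 1) * (t * t `^ (w - 1)) by ring.
rewrite mulr_powRB1 ?(ltW t_gt0) //.
by apply: ler_wpM2r; [exact: powR_ge0 | exact: two_powR_le].
Qed.

Lemma holder_profile_le w a b t : 0 < w -> w < 1 -> 0 < t -> 0 <= b <= a ->
  a - b <= t <= a + b -> a `^ (w - 1) * (t - b) + b `^ w <= 2 `^ (1 - w) * t `^ w.
Proof.
move=> w_gt0 w_lt1 t_gt0 /andP[b_ge0 ba] /andP[abt tab].
have w1_le0 : w - 1 <= 0 by lra.
have [bt|tb] := leP b t; last first.
  apply: le_trans (holder_profile_near_diag w_gt0 w_lt1 t_gt0 (ltW tb)).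
  rewrite lerD2r; apply: ler_wnM2r; first lra.
  by apply: ler_powR_nexp => //; lra.
have shrink m : 0 < m -> m <= a ->
    a `^ (w - 1) * (t - b) + b `^ w <= m `^ (w - 1) * (t - b) + b `^ w.
  move=> m_gt0 ma; rewrite lerD2r; apply: ler_wpM2r; first lra.
  exact: ler_powR_nexp.
(* For t >= b the profile decreases in a, so a can be lowered to max(b, t - b). *)
have [t2b|t2b] := leP (2 * b) t.
  apply: le_trans (shrink (t - b) _ _) _; [lra | lra |].
  rewrite mulrC mulr_powRB1 //; last lra.
  by have := @powR_sum_le w (t - b) b w_gt0 w_lt1 (ltac:(lra)) b_ge0; rewrite subrK.
have b_gt0 : 0 < b by lra.
apply: le_trans (shrink b b_gt0 ba) _.
rewrite -(mulr_powRB1 (ltW b_gt0) w_gt0) [b * _]mulrC -mulrDr subrK.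
rewrite -(powR_divn2_mul w_gt0 (ltW t_gt0)); apply: ler_wpM2r; first lra.
by apply: ler_powR_nexp => //; lra.
Qed.

Definition eta_ratio p w s : R :=
  (1 - s `^ w) / (1 - s) * (1 + s `^ (p * w)) `^ ((1 - w) / (p * w)).

Lemma eta_ratio0 p w : 0 < p -> 0 < w -> eta_ratio p w 0 = 1.
Proof.
move=> p_gt0 w_gt0; rewrite /eta_ratio !powR0 ?gt_eqF ?mulr_gt0 //.
by rewrite !subr0 addr0 powR1 divr1 mulr1.
Qed.

Lemma eta_ratio_ge0 p w s : 0 < w -> 0 <= s < 1 -> 0 <= eta_ratio p w s.
Proof.
move=> w_gt0 /andP[s_ge0 s_lt1].
rewrite mulr_ge0 ?powR_ge0 // divr_ge0 ?subr_ge0 ?(ltW s_lt1) //.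
by rewrite powR_le1 ?(ltW w_gt0) ?s_ge0 ?(ltW s_lt1).
Qed.

Lemma has_lbound_eta_ratio p w : 0 < w -> has_lbound (eta_ratio p w @` `[0, 1[).
Proof.
move=> w_gt0; exists 0 => _ [s + <-].
by rewrite /= in_itv /=; exact: eta_ratio_ge0.
Qed.

Lemma eta_const_le p w s : 0 < w -> 0 <= s < 1 -> eta_const p w <= eta_ratio p w s.
Proof.
move=> w_gt0 s01; apply: ge_inf; first exact: has_lbound_eta_ratio.
by exists s => //=; rewrite in_itv.
Qed.

Lemma eta_const_le1 p w : 0 < p -> 0 < w -> eta_const p w <= 1.
Proof.
move=> p_gt0 w_gt0; rewrite -(eta_ratio0 p_gt0 w_gt0).
by apply: eta_const_le; rewrite // lexx ltr01.
Qed.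

Lemma eta_const_approx p w c : 0 < w -> eta_const p w < c ->
  exists2 s, 0 <= s < 1 & eta_ratio p w s < c.
Proof.
move=> w_gt0 eta_c; have ne : eta_ratio p w @` `[0, 1[ !=set0.
  by exists (eta_ratio p w 0), 0 => //=; rewrite in_itv /= lexx ltr01.
have e_gt0 : 0 < c - eta_const p w by rewrite subr_gt0.
have [_ [s s01 <-]] := inf_adherent e_gt0 (conj ne (has_lbound_eta_ratio p w_gt0)).
by rewrite subrKC; exists s; rewrite /= in_itv in s01.
Qed.

Lemma eta_ratio_mul p w a s : 0 < p -> 0 < w -> 0 <= a -> 0 <= s < 1 ->
  eta_ratio p w s * (a - s * a) =
  (a `^ w - (s * a) `^ w) * (a `^ (p * w) + (s * a) `^ (p * w)) `^ ((1 - w) / (p * w)).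
Proof.
move=> p_gt0 w_gt0 a_ge0 /andP[s_ge0 s_lt1].
have pw_neq0 : p * w != 0 by rewrite gt_eqF ?mulr_gt0.
rewrite !powRM //.
have -> : a `^ (p * w) + s `^ (p * w) * a `^ (p * w) = a `^ (p * w) * (1 + s `^ (p * w)).
  by ring.
have aE : (a `^ (p * w)) `^ ((1 - w) / (p * w)) = a `^ (1 - w).
  by rewrite -powRrM mulrC divfK.
rewrite powRM ?addr_ge0 ?powR_ge0 // aE.
have -> : (a `^ w - s `^ w * a `^ w) * (a `^ (1 - w) * (1 + s `^ (p * w)) `^ ((1 - w) / (p * w)))
    = (1 - s `^ w) * (1 + s `^ (p * w)) `^ ((1 - w) / (p * w)) * (a `^ w * a `^ (1 - w)) by ring.
rewrite powR_mulB1r // /eta_ratio; field.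
by rewrite subr_eq0 gt_eqF.
Qed.

Section NormedModule.
Variable X : normedModType R.
Implicit Types x y z : X.

Lemma f_omegaE w x : f_omega w x = `|x| `^ (w - 1) *: x.
Proof. by rewrite /f_omega; case: eqP => [->|//]; rewrite scaler0. Qed.

Lemma norm_f_omega w x : 0 < w -> `|f_omega w x| = `|x| `^ w.
Proof.
by move=> w_gt0; rewrite f_omegaE normrZ ger0_norm ?powR_ge0 // mulrC mulr_powRB1.
Qed.

Lemma f_omegaK w x : `|x| `^ (1 - w) *: f_omega w x = x.
Proof.
have [->|x_neq0] := eqVneq x 0; first by rewrite /f_omega eqxx scaler0.
by rewrite f_omegaE scalerA powR_mul1BN ?normr_gt0 // scale1r.
Qed.

Lemma f_omegaZ w s x : 0 < w -> 0 <= s -> f_omega w (s *: x) = s `^ w *: f_omega w x.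
Proof.
move=> w_gt0 s_ge0; rewrite !f_omegaE normrZ ger0_norm // powRM // !scalerA.
by rewrite mulrAC [s `^ _ * s]mulrC mulr_powRB1.
Qed.

Lemma f_omegaN w x : f_omega w (- x) = - f_omega w x.
Proof. by rewrite !f_omegaE normrN scalerN. Qed.

Lemma f_omega_norm1 w z : `|z| = 1 -> f_omega w z = z.
Proof. by move=> z1; rewrite f_omegaE z1 powR1 scale1r. Qed.

Lemma f_omegaB_le w x y : 0 < w -> w < 1 -> `|y| <= `|x| ->
  `|f_omega w x - f_omega w y| <= `|x| `^ (w - 1) * (`|x - y| - `|y|) + `|y| `^ w.
Proof.
move=> w_gt0 w_lt1 yx.
have -> : f_omega w x - f_omega w y =
    `|x| `^ (w - 1) *: (x - y) + (`|x| `^ (w - 1) - `|y| `^ (w - 1)) *: y.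
  by rewrite !f_omegaE scalerBr scalerBl addrA subrK.
apply: (le_trans (ler_normD _ _)); rewrite !normrZ ger0_norm ?powR_ge0 //.
have -> : `|(`|x| `^ (w - 1) - `|y| `^ (w - 1))| * `|y| =
    `|y| `^ w - `|x| `^ (w - 1) * `|y|.
  have [->|y_neq0] := eqVneq y 0.
    by rewrite normr0 !mulr0 powR0 ?gt_eqF // subr0.
  rewrite ler0_norm ?subr_le0; last first.
    by apply: ler_powR_nexp yx; [lra | rewrite normr_gt0].
  by rewrite opprB mulrBl [`|y| `^ _ * `|y|]mulrC mulr_powRB1.
lra.
Qed.

Lemma f_omega_holder w x y : 0 < w -> w < 1 ->
  `|f_omega w x - f_omega w y| <= 2 `^ (1 - w) * `|x - y| `^ w.
Proof.
move=> w_gt0 w_lt1; wlog yx : x y / `|y| <= `|x|.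
  move=> hwlog; have [|/ltW xy] := leP `|y| `|x|; first exact: hwlog.
  by rewrite (distrC x) (distrC (f_omega w x)); exact: hwlog.
have [->|xy] := eqVneq x y; first by rewrite !subrr normr0 mulr_ge0 ?powR_ge0.
apply: le_trans (f_omegaB_le w_gt0 w_lt1 yx) _.
apply: holder_profile_le => //; first by rewrite normr_gt0 subr_eq0.
  by rewrite normr_ge0 yx.
by rewrite lerB_dist ler_normB.
Qed.

Lemma normB_le_f_omega w x y : 0 < w -> w < 1 -> `|y| <= `|x| ->
  `|x - y| <= `|x| `^ (1 - w) * `|f_omega w x - f_omega w y|
              + (`|x| `^ (1 - w) - `|y| `^ (1 - w)) * `|y| `^ w.
Proof.
move=> w_gt0 w_lt1 yx.
have -> : x - y = `|x| `^ (1 - w) *: (f_omega w x - f_omega w y)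
    + (`|x| `^ (1 - w) - `|y| `^ (1 - w)) *: f_omega w y.
  by rewrite scalerBr scalerBl addrA subrK !f_omegaK.
apply: (le_trans (ler_normD _ _)).
rewrite !normrZ ger0_norm ?powR_ge0 // ger0_norm ?norm_f_omega // subr_ge0.
by apply: ge0_ler_powR; rewrite ?nnegrE ?normr_ge0 // subr_ge0 ltW.
Qed.

Lemma normB_mul_powRB_le w x y : 0 < w -> w < 1 -> `|y| <= `|x| ->
  `|x - y| * (`|x| `^ w - `|y| `^ w) <= `|f_omega w x - f_omega w y| * (`|x| - `|y|).
Proof.
move=> w_gt0 w_lt1 yx.
have t_le := normB_le_f_omega w_gt0 w_lt1 yx.
have D_ge := lerB_dist (f_omega w x) (f_omega w y).
rewrite !norm_f_omega // in D_ge.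
have AB : 0 <= `|x| `^ w - `|y| `^ w.
  by rewrite subr_ge0 ge0_ler_powR ?nnegrE ?normr_ge0 ?(ltW w_gt0).
have ab1 : 0 <= `|x| `^ (1 - w) - `|y| `^ (1 - w).
  by rewrite subr_ge0 ge0_ler_powR ?nnegrE ?normr_ge0 // subr_ge0 ltW.
have := ler_wpM2r AB t_le.
have := ler_wpM2l (mulr_ge0 ab1 (powR_ge0 `|y| w)) D_ge.
have -> : `|x| - `|y| = `|x| `^ w * `|x| `^ (1 - w) - `|y| `^ w * `|y| `^ (1 - w).
  by rewrite !powR_mulB1r.
lra.
Qed.

Lemma eta_const_mul_le p w x y : 0 < p -> 0 < w -> w < 1 -> `|y| <= `|x| ->
  eta_const p w * `|x - y| <=
  `|f_omega w x - f_omega w y| * (`|x| `^ (p * w) + `|y| `^ (p * w)) `^ ((1 - w) / (p * w)).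
Proof.
move=> p_gt0 w_gt0 w_lt1 yx.
have pw_neq0 : p * w != 0 by rewrite gt_eqF ?mulr_gt0.
have [yx_eq|yx_lt] := eqVneq `|y| `|x|.
  have := normB_le_f_omega w_gt0 w_lt1 yx; rewrite yx_eq subrr mul0r addr0 => t_le.
  have e_ge0 : 0 <= (1 - w) / (p * w) by rewrite divr_ge0 ?subr_ge0 ?ltW ?mulr_gt0.
  have two_e_ge1 : 1 <= 2 `^ ((1 - w) / (p * w)) :> R.
    by have := ler_powR (_ : 1 <= 2 :> R) e_ge0; rewrite powRr0 ler1n; apply.
  have -> : (`|x| `^ (p * w) + `|x| `^ (p * w)) `^ ((1 - w) / (p * w)) =
      2 `^ ((1 - w) / (p * w)) * `|x| `^ (1 - w).
    have -> : `|x| `^ (p * w) + `|x| `^ (p * w) = 2 * `|x| `^ (p * w) by ring.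
    by rewrite powRM ?ler0n ?powR_ge0 // -powRrM [p * w * _]mulrC divfK.
  apply: le_trans (ler_wpM2r (normr_ge0 _) (eta_const_le1 p_gt0 w_gt0)) _.
  rewrite mul1r (le_trans t_le) // mulrC; apply: ler_wpM2l => //.
  by rewrite ler_peMl ?powR_ge0.
have ab_gt0 : 0 < `|x| - `|y| by rewrite subr_gt0 lt_neqAle yx_lt yx.
have x_gt0 : 0 < `|x| by have := normr_ge0 y; lra.
have s01 : 0 <= `|y| / `|x| < 1 by rewrite divr_ge0 // ltr_pdivrMr // mul1r; lra.
have := eta_ratio_mul p_gt0 w_gt0 (ltW x_gt0) s01; rewrite divfK ?gt_eqF // => key.
rewrite -(ler_pM2r ab_gt0).
apply: (@le_trans _ _ (eta_ratio p w (`|y| / `|x|) * `|x - y| * (`|x| - `|y|))).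
  by apply/ler_wpM2r/ler_wpM2r => //; [exact: ltW | exact: eta_const_le].
rewrite mulrAC key mulrAC [X in _ <= X]mulrAC [_ * `|x - y|]mulrC.
by apply: ler_wpM2r; [exact: powR_ge0 | exact: normB_mul_powRB_le].
Qed.

Lemma f_omega_lower_bound p w x y : 0 < p -> 0 < w -> w < 1 ->
  eta_const p w * `|x - y| / (`|x| `^ (p * w) + `|y| `^ (p * w)) `^ ((1 - w) / (p * w))
    <= `|f_omega w x - f_omega w y|.
Proof.
move=> p_gt0 w_gt0 w_lt1; wlog yx : x y / `|y| <= `|x|.
  move=> hwlog; have [|/ltW xy] := leP `|y| `|x|; first exact: hwlog.
  by rewrite (distrC x) (distrC (f_omega w x)) [`|x| `^ _ + _]addrC; exact: hwlog.
have := powR_ge0 (`|x| `^ (p * w) + `|y| `^ (p * w)) ((1 - w) / (p * w)).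
rewrite le_eqVlt => /predU1P[<-|S_gt0]; first by rewrite invr0 mulr0.
by rewrite ler_pdivrMr //; exact: eta_const_mul_le.
Qed.

Lemma exists_norm1 : (exists z : X, z != 0) -> exists z : X, `|z| = 1.
Proof.
move=> [z z_neq0]; exists (`|z|^-1 *: z).
by rewrite normrZ ger0_norm ?invr_ge0 // mulVf // normr_eq0.
Qed.

Lemma eta_const_sharp p w c z : 0 < p -> 0 < w -> `|z| = 1 -> eta_const p w < c ->
  exists x y : X, `|f_omega w x - f_omega w y|
      < c * `|x - y| / (`|x| `^ (p * w) + `|y| `^ (p * w)) `^ ((1 - w) / (p * w)).
Proof.
move=> p_gt0 w_gt0 z1 eta_c.
have [s /andP[s_ge0 s_lt1] ratio_c] := eta_const_approx w_gt0 eta_c.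
have distZ r : 0 <= r <= 1 -> `|z - r *: z| = 1 - r.
  case/andP=> r_ge0 r_le1.
  by rewrite -{1}(scale1r z) -scalerBl normrZ z1 mulr1 ger0_norm ?subr_ge0.
exists z, (s *: z).
have sw01 : 0 <= s `^ w <= 1 by rewrite powR_ge0 powR_le1 ?(ltW w_gt0) ?s_ge0 ?(ltW s_lt1).
rewrite f_omegaZ // f_omega_norm1 // !distZ ?s_ge0 ?(ltW s_lt1) //.
rewrite normrZ z1 mulr1 ger0_norm // powR1 ltr_pdivlMr ?powR_gt0 ?ltr_wpDr ?powR_ge0 //.
by move: ratio_c; rewrite /eta_ratio mulrAC ltr_pdivrMr // subr_gt0.
Qed.

Lemma holder_const_sharp w c z : 0 < w -> `|z| = 1 -> c < 2 `^ (1 - w) ->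
  exists x y : X, c * `|x - y| `^ w < `|f_omega w x - f_omega w y|.
Proof.
move=> w_gt0 z1 c_lt; exists z, (- z).
rewrite f_omegaN f_omega_norm1 // opprK -mulr2n -scaler_nat normrZ z1 mulr1 ger0_norm ?ler0n //.
apply: (@lt_le_trans _ _ (2 `^ (1 - w) * 2 `^ w)); first by rewrite ltr_pM2r ?powR_gt0.
by rewrite mulrC powR_mulB1r ?ler0n.
Qed.

End NormedModule.

End PowerFunction.

Theorem lemma5p12 (R : realType) (X : completeNormedModType R) (w : R)
  (hw0 : 0 < w) (hw1 : w < 1) :
  (forall (p : R), 0 < p -> forall x y : X,
      eta_const p w * `|x - y| / (`|x| `^ (p * w) + `|y| `^ (p * w)) `^ ((1 - w) / (p * w))
        <= `|f_omega w x - f_omega w y|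
      /\ `|f_omega w x - f_omega w y| <= 2 `^ (1 - w) * `|x - y| `^ w)
  /\
  ((exists z : X, z != 0) ->
     (forall (p : R), 0 < p -> forall c : R, eta_const p w < c ->
        exists x y : X,
          `|f_omega w x - f_omega w y|
            < c * `|x - y| / (`|x| `^ (p * w) + `|y| `^ (p * w)) `^ ((1 - w) / (p * w)))
     /\
     (forall c : R, c < 2 `^ (1 - w) ->
        exists x y : X, c * `|x - y| `^ w < `|f_omega w x - f_omega w y|)).
Proof.
split=> [p p_gt0 x y|X_nontrivial].
  by split; [exact: f_omega_lower_bound | exact: f_omega_holder].
have [z z1] := exists_norm1 X_nontrivial.
split=> [p p_gt0 c|c].
  exact: eta_const_sharp p_gt0 hw0 z1.
exact: holder_const_sharp hw0 z1.
Qed.
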